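(* Let $\mathcal{B}_4$, $\pi_{\lambda,\mu}$ ($\lambda\neq0,\mu\in\mathbb{R}$), the group Fourier transform and the difference operators $\Delta_{x_i}$ be as in the context. Then for a suitable distribution $\kappa$ on $\mathcal{B}_4$ (e.g. $\kappa\in\mathcal{S}(\mathbb{R}^4)$), for $h$ (e.g. in $\mathcal{S}(\mathbb{R})$) and $u\in\mathbb{R}$, $$\begin{aligned}(\Delta_{x_4}\pi_{\lambda,\mu}(\kappa))h(u)={}& i\,\partial_\lambda\{\pi_{\lambda,\mu}(\kappa)h(u)\}-\Big(\frac{\mu}{2\lambda^2}+\frac{u^2}{2}\Big)\{\Delta_{x_2}\pi_{\lambda,\mu}(\kappa)h(u)\}+u\{\Delta_{x_3}\pi_{\lambda,\mu}(\kappa)h(u)\}\\&-\{\Delta_{x_3}\Delta_{x_1}\pi_{\lambda,\mu}(\kappa)h(u)\}+u\{\Delta_{x_2}\Delta_{x_1}\pi_{\lambda,\mu}(\kappa)h(u)\}-\frac12\{\Delta_{x_2}\Delta_{x_1}^2\pi_{\lambda,\mu}(\kappa)h(u)\}.\end{aligned}$$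
   Context: The Engel group $\mathcal{B}_4$ is $\mathbb{R}^4$ with the law $(x_1,x_2,x_3,x_4)\circ(y_1,y_2,y_3,y_4)=(x_1+y_1,x_2+y_2,x_3+y_3-x_1y_2,x_4+y_4+\frac12x_1^2y_2-x_1y_3)$ and Haar measure the Lebesgue measure. For $\lambda\neq0$, $\mu\in\mathbb{R}$, $\pi_{\lambda,\mu}(x)h(u)=\exp\big(i(-\frac{\mu}{2\lambda}x_2+\lambda x_4-\lambda x_3u+\frac{\lambda}{2}x_2u^2)\big)h(u+x_1)$ on $L^2(\mathbb{R})$. The group Fourier transform is $\hat\kappa(\pi_{\lambda,\mu})=\pi_{\lambda,\mu}(\kappa)=\int_{\mathcal{B}_4}\kappa(x)\pi_{\lambda,\mu}(x)^*dx$; explicitly $\pi_{\lambda,\mu}(\kappa)h(u)=\int_{\mathbb{R}^4}\kappa(x)\exp\big(i(\frac{\mu}{2\lambda}x_2-\lambda x_4+\lambda x_3(u-x_1)-\frac{\lambda}{2}x_2(u-x_1)^2)\big)h(u-x_1)\,dx$. The difference operators are defined by $\Delta_{x_i}\hat\kappa(\pi_{\lambda,\mu}):=\pi_{\lambda,\mu}(x_i\kappa)$, $i=1,\dots,4$, where $x_i\kappa$ is $\kappa$ multiplied by the coordinate $x_i$; compositions act as $\Delta_{x_i}\Delta_{x_j}\pi_{\lambda,\mu}(\kappa)=\pi_{\lambda,\mu}(x_ix_j\kappa)$ and $\Delta_{x_1}^2\pi_{\lambda,\mu}(\kappa)=\pi_{\lambda,\mu}(x_1^2\kappa)$. $\partial_\lambda\{\pi_{\lambda,\mu}(\kappa)h(u)\}$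 is the derivative with respect to the parameter $\lambda$ of the function $\pi_{\lambda,\mu}(\kappa)h(u)$, and the factors $u$, $u^2$ act by multiplication after applying the operators. *)

From Stdlib Require Import Reals List.
From Coquelicot Require Import Coquelicot.
Open Scope R_scope.

Definition cint (f : R -> C) : C :=
  (RInt_gen (fun t => Re (f t)) (Rbar_locally m_infty) (Rbar_locally p_infty),
   RInt_gen (fun t => Im (f t)) (Rbar_locally m_infty) (Rbar_locally p_infty)).

(** Integral over R^4 (Lebesgue measure) written as an iterated integral;
    for the integrable (Schwartz-type) integrands used here this equals
    the integral over R^4 by Fubini. *)
Definition cint4 (f : R -> R -> R -> R -> C) : C :=
  cint (fun x1 => cint (fun x2 => cint (fun x3 => cint (fun x4 => f x1 x2 x3 x4)))).

Definition expi (t : R) : C := (cos t, sin t).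

Definition kernel := R -> R -> R -> R -> C.

Definition piF (lam mu : R) (kappa : kernel) (h : R -> C) (u : R) : C :=
  cint4 (fun x1 x2 x3 x4 =>
    (kappa x1 x2 x3 x4 *
     expi (mu / (2 * lam) * x2 - lam * x4 + lam * x3 * (u - x1)
           - lam / 2 * x2 * (u - x1) ^ 2)%R *
     h (u - x1)%R)%C).

Definition xmul (i : nat) (kappa : kernel) : kernel :=
  fun x1 x2 x3 x4 =>
    (RtoC (match i with 1%nat => x1 | 2%nat => x2 | 3%nat => x3 | _ => x4 end)
     * kappa x1 x2 x3 x4)%C.

Definition DeltaX (i : nat) (lam mu : R) (kappa : kernel) : (R -> C) -> R -> C :=
  piF lam mu (xmul i kappa).

Definition pderiv (i : nat) (f : R -> R -> R -> R -> R) : R -> R -> R -> R -> R :=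
  fun x1 x2 x3 x4 =>
    match i with
    | 1%nat => Derive (fun t => f t x2 x3 x4) x1
    | 2%nat => Derive (fun t => f x1 t x3 x4) x2
    | 3%nat => Derive (fun t => f x1 x2 t x4) x3
    | _ => Derive (fun t => f x1 x2 x3 t) x4
    end.

Definition pderivs (l : list nat) (f : R -> R -> R -> R -> R) :=
  fold_right pderiv f l.

Definition Schwartz4 (f : R -> R -> R -> R -> R) : Prop :=
  forall l : list nat,
    let g := pderivs l f in
    (forall x1 x2 x3 x4,
        ex_derive (fun t => g t x2 x3 x4) x1 /\
        ex_derive (fun t => g x1 t x3 x4) x2 /\
        ex_derive (fun t => g x1 x2 t x4) x3 /\
        ex_derive (fun t => g x1 x2 x3 t) x4) /\
    (forall k1 k2 k3 k4 : nat, exists M : R, forall x1 x2 x3 x4,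
        Rabs (x1 ^ k1 * x2 ^ k2 * x3 ^ k3 * x4 ^ k4 * g x1 x2 x3 x4) <= M).

Definition SchwartzC4 (kappa : kernel) : Prop :=
  Schwartz4 (fun x1 x2 x3 x4 => Re (kappa x1 x2 x3 x4)) /\
  Schwartz4 (fun x1 x2 x3 x4 => Im (kappa x1 x2 x3 x4)).

Definition Schwartz1 (f : R -> R) : Prop :=
  forall n : nat,
    (forall x, ex_derive (Derive_n f n) x) /\
    (forall k : nat, exists M : R, forall x, Rabs (x ^ k * Derive_n f n x) <= M).

Definition SchwartzC1 (h : R -> C) : Prop :=
  Schwartz1 (fun t => Re (h t)) /\ Schwartz1 (fun t => Im (h t)).

From Stdlib Require Import Reals Lra Lia FunctionalExtensionality.
From Coquelicot Require Import Coquelicot.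
Open Scope R_scope.

(* Differentiating under the integral sign, the lambda-derivative of the integrand of
   pi_{lambda,mu}(kappa) h (u) is the integrand times i d_lambda phi, where phi is the phase and
   d_lambda phi = - mu x2 / (2 lambda^2) - x4 + x3 (u - x1) - x2 (u - x1)^2 / 2.  Solving for x4 and
   expanding (u - x1)^2 writes x4 times the integrand as i d_lambda(integrand) plus the integrand
   times x2, x3, x1 x3, x1 x2 and x1^2 x2 with exactly the coefficients of the theorem.

   The analysis runs on the weight rho(x) = prod_i (1 + x_i^2).  The Schwartz kernel, multiplied
   by the phase factor, by h and by polynomials, stays O(rho^z) for every z together with its
   first partial derivatives; anything that is O(1/rho) together with its first partials has
   Lipschitz sections dominated by 1 / (1 + t^2) in each variable, so the iterated improper
   integrals exist and are linear.
   Since phi(lambda + d) - phi(lambda) - d d_lambda phi = mu x2 d^2 / (2 lambda^2 (lambda + d)),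
   a second-order Taylor bound for cos and sin makes the remainder of the integrand O(d^2 rho^6)
   times the decay of kappa h, hence the remainder of the integral O(d^2). *)

(** * Improper integrals dominated by [1 / (1 + t^2)] *)

Notation ex_RInt_line f := (ex_RInt_gen f (Rbar_locally m_infty) (Rbar_locally p_infty)).
Notation is_RInt_line f l := (is_RInt_gen f (Rbar_locally m_infty) (Rbar_locally p_infty) l).
Notation RInt_line f := (RInt_gen f (Rbar_locally m_infty) (Rbar_locally p_infty)).

Definition weight (t : R) : R := / (1 + t ^ 2).

Lemma weight_pos t : 0 < weight t.
Proof. apply Rinv_0_lt_compat; nra. Qed.

Lemma continuous_weight t : continuous weight t.
Proof. apply (ex_derive_continuous (V := R_NormedModule)); unfold weight; auto_derive; nra. Qed.

Lemma is_derive_atan t : is_derive atan t (weight t).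
Proof. apply is_derive_Reals, derivable_pt_lim_atan. Qed.

Lemma atan_cvg_p_infty : filterlim atan (Rbar_locally p_infty) (locally (PI / 2)).
Proof.
  apply filterlim_locally; intros eps.
  pose proof PI2_1.
  set (e := Rmin eps 1).
  assert (He : 0 < e <= eps) by (unfold e; split; [apply Rmin_pos; [apply cond_pos | lra] | apply Rmin_l]).
  assert (He1 : e <= 1) by apply Rmin_r.
  exists (tan (PI / 2 - e)); intros x Hx.
  apply atan_increasing in Hx; rewrite atan_tan in Hx by lra.
  pose proof (atan_bound x).
  change (Rabs (atan x - PI / 2) < eps); apply Rabs_def1; lra.
Qed.

Lemma atan_cvg_m_infty : filterlim atan (Rbar_locally m_infty) (locally (- (PI / 2))).
Proof.
  apply (filterlim_ext (fun x => - atan (- x))).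
  { intros x; rewrite atan_opp; ring. }
  apply (filterlim_comp _ _ _ (fun x => atan (- x)) Ropp _ (locally (PI / 2))).
  - apply (filterlim_comp _ _ _ Ropp atan _ (Rbar_locally p_infty)).
    + apply (filterlim_Rbar_opp m_infty).
    + apply atan_cvg_p_infty.
  - apply (filterlim_opp (PI / 2)).
Qed.

Lemma filterlim_of_dominated_increments {T : Type} {F : (T -> Prop) -> Prop} {FF : ProperFilter F}
  (G A : T -> R) (D la : R) :
  (forall u v, Rabs (G u - G v) <= D * Rabs (A u - A v)) ->
  filterlim A F (locally la) -> exists l, filterlim G F (locally l).
Proof.
  intros HGA HA; apply (filterlim_locally_cauchy (U := R_CompleteSpace)); intros eps.
  set (D' := Rabs D + 1).
  assert (HD' : 0 < D') by (unfold D'; pose proof (Rabs_pos D); lra).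
  assert (He : 0 < eps / (2 * D')) by (apply Rdiv_lt_0_compat; [apply cond_pos | lra]).
  exists (fun x => ball la (mkposreal _ He) (A x)); split.
  { apply (proj1 (filterlim_locally A la) HA). }
  intros u v Hu Hv.
  change (Rabs (A u - la) < eps / (2 * D')) in Hu.
  change (Rabs (A v - la) < eps / (2 * D')) in Hv.
  change (Rabs (G v - G u) < eps).
  assert (HAuv : Rabs (A v - A u) < eps / D').
  { replace (A v - A u) with ((A v - la) - (A u - la)) by ring.
    eapply Rle_lt_trans; [apply Rabs_triang | rewrite Rabs_Ropp].
    replace (eps / D') with (eps / (2 * D') + eps / (2 * D')) by (field; lra); lra. }
  eapply Rle_lt_trans; [apply HGA |].
  apply Rle_lt_trans with (D' * Rabs (A v - A u)).
  - apply Rmult_le_compat_r; [apply Rabs_pos |]; pose proof (Rle_abs D); unfold D'; lra.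
  - replace (pos eps) with (D' * (eps / D')) by (field; lra).
    apply Rmult_lt_compat_l; lra.
Qed.

Section DominatedByWeight.

Variables (g : R -> R) (D : R).
Hypothesis g_cont : forall t, continuous g t.
Hypothesis g_le : forall t, Rabs (g t) <= D * weight t.

Lemma ex_RInt_dominated a b : ex_RInt g a b.
Proof. apply (ex_RInt_continuous (V := R_CompleteNormedModule)); auto. Qed.

Lemma abs_RInt_le_atan a b : Rabs (RInt g a b) <= D * Rabs (atan b - atan a).
Proof.
  assert (Hle : forall a b, a <= b -> Rabs (RInt g a b) <= D * Rabs (atan b - atan a)).
  { clear a b; intros a b Hab.
    assert (Hw : is_RInt (fun t => D * weight t) a b (minus (D * atan b) (D * atan a))).
    { apply (is_RInt_derive (V := R_CompleteNormedModule) (fun t => D * atan t)).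
      - intros t _; apply (is_derive_scal atan t D), is_derive_atan.
      - intros t _; apply (continuous_scal_r D weight), continuous_weight. }
    assert (Hat : atan a <= atan b).
    { destruct Hab as [Hab | ->]; [left; apply atan_increasing, Hab | right; reflexivity]. }
    rewrite (Rabs_pos_eq (atan b - atan a)) by lra.
    replace (D * (atan b - atan a)) with (minus (D * atan b) (D * atan a))
      by (unfold minus, plus, opp; simpl; ring).
    apply (norm_RInt_le (V := R_NormedModule) g (fun t => D * weight t) a b); auto.
    apply (RInt_correct (V := R_CompleteNormedModule)), ex_RInt_dominated. }
  destruct (Rle_or_lt a b) as [Hab | Hba]; [now apply Hle |].
  rewrite <- (opp_RInt_swap (V := R_CompleteNormedModule)) by apply ex_RInt_dominated.
  change (Rabs (- RInt g b a) <= D * Rabs (atan b - atan a)).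
  rewrite Rabs_Ropp, Rabs_minus_sym; apply Hle; lra.
Qed.

Lemma ex_RInt_line_dominated : ex_RInt_line g.
Proof.
  set (G x := RInt g 0 x).
  assert (HG : forall x, is_derive G x (g x)).
  { intros x; apply (is_derive_RInt (V := R_CompleteNormedModule) g G 0 x); auto.
    apply filter_forall; intros b.
    apply (RInt_correct (V := R_CompleteNormedModule)), ex_RInt_dominated. }
  assert (HGinc : forall u v, Rabs (G u - G v) <= D * Rabs (atan u - atan v)).
  { intros u v.
    assert (E : G u - G v = RInt g v u).
    { unfold G; rewrite <- (RInt_Chasles (V := R_CompleteNormedModule) g 0 v u)
        by apply ex_RInt_dominated.
      unfold plus; simpl; ring. }
    rewrite E; apply abs_RInt_le_atan. }
  destruct (filterlim_of_dominated_increments G atan D _ HGinc atan_cvg_p_infty) as [lb Hlb].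
  destruct (filterlim_of_dominated_increments G atan D _ HGinc atan_cvg_m_infty) as [la Hla].
  exists (lb - la).
  apply (is_RInt_gen_ext (Derive G)).
  { apply filter_forall; intros _ x _; apply is_derive_unique, HG. }
  apply is_RInt_gen_Derive; auto; apply filter_forall; intros _ x _.
  - eexists; apply HG.
  - apply (continuous_ext g); auto.
    intros y; symmetry; apply is_derive_unique, HG.
Qed.

End DominatedByWeight.

Definition weight_integral : R := RInt_line weight.

Lemma ex_RInt_line_weight : ex_RInt_line weight.
Proof.
  apply (ex_RInt_line_dominated weight 1 continuous_weight).
  intros t; rewrite Rabs_pos_eq by (left; apply weight_pos); lra.
Qed.

Lemma abs_RInt_line_le (g : R -> R) (D : R) :
  ex_RInt_line g -> (forall t, Rabs (g t) <= D * weight t) ->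
  Rabs (RInt_line g) <= D * weight_integral.
Proof.
  intros Hg HgD.
  apply (RInt_gen_norm (V := R_CompleteNormedModule)
    (Fa := Rbar_locally m_infty) (Fb := Rbar_locally p_infty) g (fun t => D * weight t)).
  - apply (Filter_prod _ _ _ (fun x => x < 0) (fun x => 0 < x)); try (exists 0; auto).
    simpl; intros; lra.
  - apply filter_forall; intros _ x _; apply HgD.
  - apply (RInt_gen_correct (V := R_CompleteNormedModule)), Hg.
  - apply (is_RInt_gen_scal weight D).
    apply (RInt_gen_correct (V := R_CompleteNormedModule)), ex_RInt_line_weight.
Qed.

Lemma is_RInt_line_lin (f g : R -> R) (a b : R) :
  ex_RInt_line f -> ex_RInt_line g ->
  is_RInt_line (fun t => a * f t + b * g t) (a * RInt_line f + b * RInt_line g).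
Proof.
  intros Hf Hg.
  apply (is_RInt_gen_plus (V := R_NormedModule) (fun t => a * f t) (fun t => b * g t));
    apply (is_RInt_gen_scal (V := R_NormedModule));
    apply (RInt_gen_correct (V := R_CompleteNormedModule)); assumption.
Qed.

(** * Iterated integrals over [R^n] *)

Lemma one_plus_sq_pos t : 0 < 1 + t ^ 2.
Proof. nra. Qed.

Definition vec := nat -> R.

Definition vzero : vec := fun _ => 0.

Definition vcons (t : R) (v : vec) : vec := fun i => match i with O => t | S k => v k end.

Definition upd (v : vec) (j : nat) (t : R) : vec := fun i => if Nat.eqb i j then t else v i.

Lemma upd_eq v j t : upd v j t j = t.
Proof. unfold upd; rewrite Nat.eqb_refl; reflexivity. Qed.

Lemma upd_upd v j s t : upd (upd v j s) j t = upd v j t.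
Proof. apply functional_extensionality; intros i; unfold upd; destruct (Nat.eqb i j); reflexivity. Qed.

Lemma upd_id v j : upd v j (v j) = v.
Proof.
  apply functional_extensionality; intros i; unfold upd.
  destruct (Nat.eqb i j) eqn:E; [apply Nat.eqb_eq in E; subst |]; reflexivity.
Qed.

Lemma upd_vcons_0 t v s : upd (vcons t v) 0 s = vcons s v.
Proof. apply functional_extensionality; intros [|i]; reflexivity. Qed.

Lemma upd_vcons_S t v j s : upd (vcons t v) (S j) s = vcons t (upd v j s).
Proof. apply functional_extensionality; intros [|i]; reflexivity. Qed.

(* [/ rho n v] is the weight dominating the integrands of [iter_integral n]. *)
Fixpoint rho (n : nat) (v : vec) : R :=
  match n with
  | O => 1
  | S n => (1 + v O ^ 2) * rho n (fun i => v (S i))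
  end.

Lemma rho_ge_1 n v : 1 <= rho n v.
Proof.
  revert v; induction n as [|n IH]; intros v; simpl; [lra |].
  specialize (IH (fun i => v (S i))); pose proof (one_plus_sq_pos (v O)); nra.
Qed.

Lemma rho_pos n v : 0 < rho n v.
Proof. pose proof (rho_ge_1 n v); lra. Qed.

Lemma rho_vcons n t v : rho (S n) (vcons t v) = (1 + t ^ 2) * rho n v.
Proof. reflexivity. Qed.

Lemma abs_coord_le_rho n v k : (k < n)%nat -> Rabs (v k) <= rho n v.
Proof.
  assert (Ha : forall a, Rabs a <= 1 + a ^ 2).
  { intros a; destruct (Rle_or_lt 0 a); [rewrite Rabs_pos_eq | rewrite Rabs_left]; nra. }
  revert v k; induction n as [|n IH]; intros v k Hk; [lia |]; simpl.
  pose proof (rho_ge_1 n (fun i => v (S i))).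
  assert (0 <= v O ^ 2) by nra.
  destruct k as [|k].
  - specialize (Ha (v O)); pose proof (Rabs_pos (v O)); nra.
  - specialize (IH (fun i => v (S i)) k ltac:(lia)); simpl in IH.
    pose proof (Rabs_pos (v (S k))); nra.
Qed.

Lemma rho_upd n v j t :
  (j < n)%nat -> rho n (upd v j t) * (1 + v j ^ 2) = rho n v * (1 + t ^ 2).
Proof.
  revert v j; induction n as [|n IH]; intros v j Hj; [lia |].
  change (rho (S n) (upd v j t)) with ((1 + upd v j t O ^ 2) * rho n (fun i => upd v j t (S i))).
  change (rho (S n) v) with ((1 + v O ^ 2) * rho n (fun i => v (S i))).
  destruct j as [|j].
  - change (upd v 0 t O) with t; change (fun i => upd v 0 t (S i)) with (fun i => v (S i)); ring.
  - change (upd v (S j) t O) with (v O).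
    change (fun i => upd v (S j) t (S i)) with (upd (fun i => v (S i)) j t).
    specialize (IH (fun i => v (S i)) j ltac:(lia)); cbv beta in IH.
    transitivity ((1 + v O ^ 2) * (rho n (upd (fun i => v (S i)) j t) * (1 + v (S j) ^ 2)));
      [ring | rewrite IH; ring].
Qed.

(* [(1 + v j ^ 2) / rho n v] is the product weight of the coordinates other than [j]. *)
Definition dominated_lipschitz (n : nat) (F : vec -> R) : Prop :=
  exists C L : R,
    (forall v, Rabs (F v) <= C / rho n v) /\
    (forall j v t, (j < n)%nat ->
       Rabs (F v - F (upd v j t)) <= L * Rabs (v j - t) * (1 + v j ^ 2) / rho n v).

Definition integrate_head (F : vec -> R) (v : vec) : R := RInt_line (fun t => F (vcons t v)).

Fixpoint iter_integral (n : nat) (F : vec -> R) : vec -> R :=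
  match n with
  | O => F
  | S n => iter_integral n (integrate_head F)
  end.

Lemma lipschitz_continuous (g : R -> R) (L : R) :
  (forall s t, Rabs (g s - g t) <= L * Rabs (s - t)) -> forall t, continuous g t.
Proof.
  intros HL t; apply continuity_pt_filterlim; intros eps Heps.
  set (L' := Rabs L + 1).
  assert (HL' : 0 < L') by (unfold L'; pose proof (Rabs_pos L); lra).
  exists (eps / L'); split; [apply Rdiv_lt_0_compat; lra |].
  intros s [_ Hs]; simpl in *; unfold R_dist in *.
  eapply Rle_lt_trans; [apply HL |].
  apply Rle_lt_trans with (L' * Rabs (s - t)).
  - apply Rmult_le_compat_r; [apply Rabs_pos |]; pose proof (Rle_abs L); unfold L'; lra.
  - replace eps with (L' * (eps / L')) by (field; lra); apply Rmult_lt_compat_l; lra.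
Qed.

Section IteratedIntegral.

Variable n : nat.

Lemma ex_RInt_line_head (F : vec -> R) v :
  dominated_lipschitz (S n) F -> ex_RInt_line (fun t => F (vcons t v)).
Proof.
  intros (C & L & HC & HL); pose proof (rho_pos n v).
  apply (ex_RInt_line_dominated _ (C / rho n v)).
  - apply (lipschitz_continuous _ (L / rho n v)); intros s t.
    specialize (HL O (vcons s v) t ltac:(lia)).
    rewrite upd_vcons_0, rho_vcons in HL; simpl in HL.
    pose proof (one_plus_sq_pos s).
    replace (L / rho n v * Rabs (s - t))
      with (L * Rabs (s - t) * (1 + s ^ 2) / ((1 + s ^ 2) * rho n v)) by (field; lra).
    exact HL.
  - intros t; specialize (HC (vcons t v)); rewrite rho_vcons in HC.
    pose proof (one_plus_sq_pos t).
    unfold weight; replace (C / rho n v * / (1 + t ^ 2)) with (C / ((1 + t ^ 2) * rho n v))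
      by (field; lra).
    exact HC.
Qed.

Lemma abs_integrate_head_le (F : vec -> R) C :
  dominated_lipschitz (S n) F -> (forall v, Rabs (F v) <= C / rho (S n) v) ->
  forall v, Rabs (integrate_head F v) <= C * weight_integral / rho n v.
Proof.
  intros HF HC v; pose proof (rho_pos n v).
  replace (C * weight_integral / rho n v) with (C / rho n v * weight_integral) by (field; lra).
  apply (abs_RInt_line_le (fun t => F (vcons t v))); [apply ex_RInt_line_head, HF |].
  intros t; specialize (HC (vcons t v)); rewrite rho_vcons in HC.
  pose proof (one_plus_sq_pos t).
  unfold weight; replace (C / rho n v * / (1 + t ^ 2)) with (C / ((1 + t ^ 2) * rho n v))
    by (field; lra).
  exact HC.
Qed.

Lemma integrate_head_lin (F G : vec -> R) a b :
  dominated_lipschitz (S n) F -> dominated_lipschitz (S n) G ->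
  integrate_head (fun v => a * F v + b * G v) = fun v => a * integrate_head F v + b * integrate_head G v.
Proof.
  intros HF HG; apply functional_extensionality; intros v; unfold integrate_head.
  apply (is_RInt_gen_unique (V := R_CompleteNormedModule)).
  apply (is_RInt_line_lin (fun t => F (vcons t v)) (fun t => G (vcons t v)));
    apply ex_RInt_line_head; assumption.
Qed.

Lemma dominated_lipschitz_integrate_head (F : vec -> R) :
  dominated_lipschitz (S n) F -> dominated_lipschitz n (integrate_head F).
Proof.
  intros HF; pose proof HF as (C & L & HC & HL).
  exists (C * weight_integral), (L * weight_integral); split.
  { apply abs_integrate_head_le; assumption. }
  intros j v s Hj; pose proof (rho_pos n v).
  assert (E : integrate_head F v - integrate_head F (upd v j s)
              = RInt_line (fun t => 1 * F (vcons t v) + (-1) * F (vcons t (upd v j s)))).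
  { symmetry; apply (is_RInt_gen_unique (V := R_CompleteNormedModule)).
    replace (integrate_head F v - integrate_head F (upd v j s))
      with (1 * integrate_head F v + (-1) * integrate_head F (upd v j s)) by ring.
    apply (is_RInt_line_lin (fun t => F (vcons t v)) (fun t => F (vcons t (upd v j s))));
      apply ex_RInt_line_head, HF. }
  rewrite E.
  replace (L * weight_integral * Rabs (v j - s) * (1 + v j ^ 2) / rho n v)
    with (L * Rabs (v j - s) * (1 + v j ^ 2) / rho n v * weight_integral) by (field; lra).
  apply (abs_RInt_line_le (fun t => 1 * F (vcons t v) + (-1) * F (vcons t (upd v j s)))).
  { eexists; apply (is_RInt_line_lin (fun t => F (vcons t v)) (fun t => F (vcons t (upd v j s))));
      apply ex_RInt_line_head, HF. }
  intros t; specialize (HL (S j) (vcons t v) s ltac:(lia)).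
  rewrite upd_vcons_S, rho_vcons in HL; simpl in HL.
  replace (1 * F (vcons t v) + -1 * F (vcons t (upd v j s)))
    with (F (vcons t v) - F (vcons t (upd v j s))) by ring.
  pose proof (one_plus_sq_pos t).
  eapply Rle_trans; [exact HL |]; unfold weight; right; field; lra.
Qed.

End IteratedIntegral.

Lemma dominated_lipschitz_ext n (F G : vec -> R) :
  (forall v, F v = G v) -> dominated_lipschitz n F -> dominated_lipschitz n G.
Proof. intros E HF; replace G with F by (apply functional_extensionality, E); exact HF. Qed.

Lemma dominated_lipschitz_lin n (F G : vec -> R) a b :
  dominated_lipschitz n F -> dominated_lipschitz n G ->
  dominated_lipschitz n (fun v => a * F v + b * G v).
Proof.
  intros (C1 & L1 & HC1 & HL1) (C2 & L2 & HC2 & HL2).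
  pose proof (Rabs_pos a); pose proof (Rabs_pos b).
  exists (Rabs a * C1 + Rabs b * C2), (Rabs a * L1 + Rabs b * L2); split.
  - intros v; pose proof (rho_pos n v).
    eapply Rle_trans; [apply Rabs_triang | rewrite !Rabs_mult].
    specialize (HC1 v); specialize (HC2 v).
    apply Rle_trans with (Rabs a * (C1 / rho n v) + Rabs b * (C2 / rho n v)).
    + apply Rplus_le_compat; apply Rmult_le_compat_l; assumption.
    + right; field; lra.
  - intros j v t Hj; pose proof (rho_pos n v).
    replace (a * F v + b * G v - (a * F (upd v j t) + b * G (upd v j t)))
      with (a * (F v - F (upd v j t)) + b * (G v - G (upd v j t))) by ring.
    eapply Rle_trans; [apply Rabs_triang | rewrite !Rabs_mult].
    specialize (HL1 j v t Hj); specialize (HL2 j v t Hj).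
    eapply Rle_trans; [apply Rplus_le_compat; apply Rmult_le_compat_l; eassumption |].
    right; field; lra.
Qed.

Lemma iter_integral_lin n : forall (F G : vec -> R) a b v,
  dominated_lipschitz n F -> dominated_lipschitz n G ->
  iter_integral n (fun v => a * F v + b * G v) v = a * iter_integral n F v + b * iter_integral n G v.
Proof.
  induction n as [|n IH]; intros F G a b v HF HG; simpl; [reflexivity |].
  rewrite (integrate_head_lin n) by assumption.
  apply IH; apply dominated_lipschitz_integrate_head; assumption.
Qed.

Lemma abs_iter_integral_le n : forall (F : vec -> R) C,
  dominated_lipschitz n F -> (forall v, Rabs (F v) <= C / rho n v) ->
  forall v, Rabs (iter_integral n F v) <= C * weight_integral ^ n.
Proof.
  induction n as [|n IH]; intros F C HF HC v; simpl.
  - specialize (HC v); simpl in HC; lra.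
  - rewrite <- Rmult_assoc; apply IH.
    + apply dominated_lipschitz_integrate_head, HF.
    + apply abs_integrate_head_le; assumption.
Qed.

(** * Partial derivatives of polynomial growth or decay *)

Lemma powerRZ_rho_pos n v z : 0 < powerRZ (rho n v) z.
Proof. apply powerRZ_lt, rho_pos. Qed.

Lemma powerRZ_rho_le n v (z1 z2 : Z) : (z1 <= z2)%Z -> powerRZ (rho n v) z1 <= powerRZ (rho n v) z2.
Proof.
  intros Hz; rewrite !powerRZ_Rpower by apply rho_pos.
  apply Rle_Rpower; [apply rho_ge_1 | apply IZR_le, Hz].
Qed.

Lemma powerRZ_rho_ge_1 n v (z : Z) : (0 <= z)%Z -> 1 <= powerRZ (rho n v) z.
Proof. intros Hz; change 1 with (powerRZ (rho n v) 0); apply powerRZ_rho_le, Hz. Qed.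

Definition smooth_growth (n : nat) (z : Z) (f : vec -> R) : Prop :=
  exists df : nat -> vec -> R,
    (forall i v, (i < n)%nat -> is_derive (fun t => f (upd v i t)) (v i) (df i v)) /\
    exists C, forall v,
      Rabs (f v) <= C * powerRZ (rho n v) z /\
      (forall i, (i < n)%nat -> Rabs (df i v) <= C * powerRZ (rho n v) z).

Lemma growth_coef_nonneg n z (f : vec -> R) C :
  (forall v, Rabs (f v) <= C * powerRZ (rho n v) z) -> 0 <= C.
Proof.
  intros Hf; specialize (Hf vzero); pose proof (powerRZ_rho_pos n vzero z).
  pose proof (Rabs_pos (f vzero)); destruct (Rle_or_lt 0 C); [assumption | nra].
Qed.

Section SmoothGrowth.

Variable n : nat.

Lemma smooth_growth_ext z (f g : vec -> R) :
  (forall v, f v = g v) -> smooth_growth n z f -> smooth_growth n z g.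
Proof.
  intros E Hf; replace g with f by (apply functional_extensionality, E); exact Hf.
Qed.

Lemma smooth_growth_le (z1 z2 : Z) f : (z1 <= z2)%Z -> smooth_growth n z1 f -> smooth_growth n z2 f.
Proof.
  intros Hz (df & Hdf & C & HC); exists df; split; [exact Hdf |].
  assert (C0 : 0 <= C) by (apply (growth_coef_nonneg n z1 f); apply HC).
  exists C; intros v; pose proof (powerRZ_rho_le n v z1 z2 Hz) as Hle.
  destruct (HC v) as [Hf Hd]; split.
  - eapply Rle_trans; [exact Hf | apply Rmult_le_compat_l; assumption].
  - intros i Hi; eapply Rle_trans; [apply Hd, Hi | apply Rmult_le_compat_l; assumption].
Qed.

Lemma smooth_growth_lin z (f g : vec -> R) a b :
  smooth_growth n z f -> smooth_growth n z g -> smooth_growth n z (fun v => a * f v + b * g v).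
Proof.
  intros (df & Hdf & C1 & H1) (dg & Hdg & C2 & H2).
  exists (fun i v => a * df i v + b * dg i v); split.
  { intros i v Hi; apply (is_derive_plus (fun t => a * f (upd v i t)) (fun t => b * g (upd v i t)));
      apply is_derive_scal; auto. }
  exists (Rabs a * C1 + Rabs b * C2); intros v.
  destruct (H1 v) as [Hf Hdf']; destruct (H2 v) as [Hg Hdg'].
  pose proof (Rabs_pos a); pose proof (Rabs_pos b).
  assert (Hcomb : forall x y, Rabs x <= C1 * powerRZ (rho n v) z -> Rabs y <= C2 * powerRZ (rho n v) z ->
    Rabs (a * x + b * y) <= (Rabs a * C1 + Rabs b * C2) * powerRZ (rho n v) z).
  { intros x y Hx Hy; eapply Rle_trans; [apply Rabs_triang | rewrite !Rabs_mult].
    apply Rle_trans with (Rabs a * (C1 * powerRZ (rho n v) z) + Rabs b * (C2 * powerRZ (rho n v) z)).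
    - apply Rplus_le_compat; apply Rmult_le_compat_l; assumption.
    - right; ring. }
  split; [apply Hcomb; assumption | intros i Hi; apply Hcomb; auto].
Qed.

Lemma smooth_growth_mul (z1 z2 : Z) (f g : vec -> R) :
  smooth_growth n z1 f -> smooth_growth n z2 g -> smooth_growth n (z1 + z2) (fun v => f v * g v).
Proof.
  intros (df & Hdf & C1 & H1) (dg & Hdg & C2 & H2).
  assert (C1p : 0 <= C1) by (apply (growth_coef_nonneg n z1 f); apply H1).
  assert (C2p : 0 <= C2) by (apply (growth_coef_nonneg n z2 g); apply H2).
  exists (fun i v => df i v * g v + f v * dg i v); split.
  { intros i v Hi.
    pose proof (is_derive_mult (fun t => f (upd v i t)) (fun t => g (upd v i t)) (v i) _ _
                  (Hdf i v Hi) (Hdg i v Hi) (fun x y => Rmult_comm x y)) as H.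
    simpl in H; rewrite upd_id in H; exact H. }
  exists (2 * C1 * C2); intros v.
  rewrite powerRZ_add by (apply Rgt_not_eq, rho_pos).
  destruct (H1 v) as [Hf Hdf']; destruct (H2 v) as [Hg Hdg'].
  set (r1 := powerRZ (rho n v) z1) in *; set (r2 := powerRZ (rho n v) z2) in *.
  assert (0 < r1) by apply powerRZ_rho_pos; assert (0 < r2) by apply powerRZ_rho_pos.
  assert (Hprod : forall x y, Rabs x <= C1 * r1 -> Rabs y <= C2 * r2 ->
                              Rabs (x * y) <= C1 * C2 * (r1 * r2)).
  { intros x y Hx Hy; rewrite Rabs_mult.
    apply Rle_trans with ((C1 * r1) * (C2 * r2));
      [apply Rmult_le_compat; auto using Rabs_pos | right; ring]. }
  assert (0 <= C1 * C2 * (r1 * r2)) by (apply Rmult_le_pos; [apply Rmult_le_pos | nra]; assumption).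
  split.
  - specialize (Hprod _ _ Hf Hg); lra.
  - intros i Hi; eapply Rle_trans; [apply Rabs_triang |].
    pose proof (Hprod _ _ (Hdf' i Hi) Hg); pose proof (Hprod _ _ Hf (Hdg' i Hi)); lra.
Qed.

Lemma smooth_growth_const (z : Z) c : (0 <= z)%Z -> smooth_growth n z (fun _ => c).
Proof.
  intros Hz; exists (fun _ _ => 0); split.
  { intros; apply (is_derive_const (V := R_NormedModule)). }
  exists (Rabs c); intros v; pose proof (powerRZ_rho_ge_1 n v z Hz); pose proof (Rabs_pos c).
  split; [nra | intros; rewrite Rabs_R0; nra].
Qed.

Lemma smooth_growth_coord k : (k < n)%nat -> smooth_growth n 1 (fun v => v k).
Proof.
  intros Hk; exists (fun i _ => if Nat.eqb i k then 1 else 0); split.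
  - intros i v Hi; unfold upd.
    destruct (Nat.eqb k i) eqn:E; rewrite Nat.eqb_sym, E.
    + apply Nat.eqb_eq in E; subst; apply (is_derive_id (K := R_AbsRing)).
    + apply (is_derive_const (V := R_NormedModule)).
  - exists 1; intros v; simpl; rewrite Rmult_1_r, Rmult_1_l; pose proof (rho_ge_1 n v); split.
    + apply abs_coord_le_rho, Hk.
    + intros i _; destruct (Nat.eqb i k); [rewrite Rabs_R1 | rewrite Rabs_R0]; lra.
Qed.

Lemma smooth_growth_comp (phi dphi : R -> R) (B : R) (z : Z) f :
  (0 <= z)%Z -> (forall x, is_derive phi x (dphi x)) ->
  (forall x, Rabs (phi x) <= B) -> (forall x, Rabs (dphi x) <= B) ->
  smooth_growth n z f -> smooth_growth n z (fun v => phi (f v)).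
Proof.
  intros Hz Hphi HB HdB (df & Hdf & C & HC).
  assert (C0 : 0 <= C) by (apply (growth_coef_nonneg n z f); apply HC).
  assert (B0 : 0 <= B) by (eapply Rle_trans; [apply Rabs_pos | apply (HB 0)]).
  exists (fun i v => df i v * dphi (f v)); split.
  { intros i v Hi; pose proof (is_derive_comp phi (fun t => f (upd v i t)) (v i) _ _
      (Hphi _) (Hdf i v Hi)) as H; simpl in H; rewrite upd_id in H; exact H. }
  exists ((C + 1) * B); intros v; destruct (HC v) as [_ Hd].
  pose proof (powerRZ_rho_ge_1 n v z Hz).
  assert (HCB : 0 <= C * B) by (apply Rmult_le_pos; assumption).
  split.
  - specialize (HB (f v)); nra.
  - intros i Hi; specialize (Hd i Hi); specialize (HdB (f v)); rewrite Rabs_mult.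
    pose proof (Rabs_pos (df i v)); pose proof (Rabs_pos (dphi (f v))).
    apply Rle_trans with (C * powerRZ (rho n v) z * B); [apply Rmult_le_compat; assumption | nra].
Qed.

(* Mean value theorem in coordinate [j], at an intermediate point [c]: moving [v_j] to [c]
   multiplies [rho n] by [(1 + c^2) / (1 + v_j^2)], which is at least [1 / (1 + v_j^2)]. *)
Lemma dominated_lipschitz_of_smooth_growth f : smooth_growth n (-1) f -> dominated_lipschitz n f.
Proof.
  intros (df & Hdf & C & HC).
  assert (C0 : 0 <= C) by (apply (growth_coef_nonneg n (-1) f); apply HC).
  assert (Hinv : forall v, powerRZ (rho n v) (-1) = / rho n v)
    by (intros v; simpl; rewrite Rmult_1_r; reflexivity).
  exists C, C; split.
  { intros v; destruct (HC v) as [Hf _]; rewrite Hinv in Hf; exact Hf. }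
  intros j v t Hj.
  assert (Hderiv : forall s, is_derive (fun s => f (upd v j s)) s (df j (upd v j s))).
  { intros s; pose proof (Hdf j (upd v j s) Hj) as H; rewrite upd_eq in H.
    eapply is_derive_ext; [| exact H]; intros r; simpl; rewrite upd_upd; reflexivity. }
  destruct (MVT_gen (fun s => f (upd v j s)) (v j) t (fun s => df j (upd v j s))) as (c & _ & Hc).
  { intros s _; apply Hderiv. }
  { intros s _; apply continuity_pt_filterlim, (ex_derive_continuous (V := R_NormedModule)).
    eexists; apply Hderiv. }
  rewrite upd_id in Hc.
  rewrite <- Rabs_Ropp, Ropp_minus_distr, Hc, Rabs_mult, (Rabs_minus_sym t).
  destruct (HC (upd v j c)) as [_ Hd]; specialize (Hd j Hj); rewrite Hinv in Hd.
  pose proof (rho_upd n v j c Hj) as Hrho.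
  pose proof (rho_pos n v); pose proof (rho_pos n (upd v j c)).
  pose proof (one_plus_sq_pos c); pose proof (one_plus_sq_pos (v j)); pose proof (Rabs_pos (v j - t)).
  assert (Hw : / rho n (upd v j c) <= (1 + v j ^ 2) / rho n v).
  { replace (/ rho n (upd v j c)) with ((1 + v j ^ 2) / (rho n v * (1 + c ^ 2)))
      by (rewrite <- Hrho; field; lra).
    unfold Rdiv; apply Rmult_le_compat_l; [lra |].
    apply Rinv_le_contravar; [assumption |]; nra. }
  apply Rle_trans with (C * / rho n (upd v j c) * Rabs (v j - t)).
  - apply Rmult_le_compat_r; assumption.
  - apply Rle_trans with (C * ((1 + v j ^ 2) / rho n v) * Rabs (v j - t)); [| right; field; lra].
    apply Rmult_le_compat_r; [assumption | apply Rmult_le_compat_l; assumption].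
Qed.

End SmoothGrowth.

(* Coordinate [i] of [v] holds the variable [x_(4-i)]: [iter_integral] integrates coordinate 0
   first, and the innermost integral of [cint4] is over [x4]. *)
Definition kvec {X : Type} (g : R -> R -> R -> R -> X) (v : vec) : X :=
  g (v 3%nat) (v 2%nat) (v 1%nat) (v 0%nat).

Definition bounded {T : Type} (f : T -> R) : Prop := exists M, forall x, Rabs (f x) <= M.

Lemma bounded_ext {T : Type} (f g : T -> R) : (forall x, f x = g x) -> bounded f -> bounded g.
Proof. intros E (M & HM); exists M; intros x; rewrite <- E; apply HM. Qed.

Lemma one_plus_pow_le a k : 0 <= a -> (1 + a) ^ k <= 2 ^ k * (1 + a ^ k).
Proof.
  intros Ha; pose proof (pow_le a k Ha); pose proof (pow_le 2 k ltac:(lra)).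
  destruct (Rle_or_lt a 1).
  - apply Rle_trans with (2 ^ k); [apply pow_incr |]; nra.
  - apply Rle_trans with ((2 * a) ^ k); [apply pow_incr; lra |].
    rewrite Rpow_mult_distr; nra.
Qed.

Lemma bounded_weight_mul {T : Type} (c Y : T -> R) k :
  bounded Y -> bounded (fun x => c x ^ (2 * k) * Y x) -> bounded (fun x => (1 + c x ^ 2) ^ k * Y x).
Proof.
  intros (M0 & H0) (M1 & H1); exists (2 ^ k * (M0 + M1)); intros x.
  specialize (H0 x); specialize (H1 x).
  assert (Hc : 0 <= c x ^ 2) by nra.
  rewrite pow_mult, Rabs_mult, Rabs_pos_eq in H1 by (apply pow_le, Hc).
  rewrite Rabs_mult, Rabs_pos_eq by (apply pow_le; nra).
  pose proof (one_plus_pow_le (c x ^ 2) k Hc); pose proof (pow_le (c x ^ 2) k Hc).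
  pose proof (pow_le 2 k ltac:(lra)); pose proof (Rabs_pos (Y x)).
  apply Rle_trans with (2 ^ k * (1 + (c x ^ 2) ^ k) * Rabs (Y x)); [apply Rmult_le_compat_r |]; nra.
Qed.

(* Expand [rho 4 v ^ k = prod_i (1 + v_i^2)^k] one coordinate at a time. *)
Lemma bounded_rho_pow_mul (g : R -> R -> R -> R -> R) :
  (forall k1 k2 k3 k4 : nat, exists M : R, forall x1 x2 x3 x4,
     Rabs (x1 ^ k1 * x2 ^ k2 * x3 ^ k3 * x4 ^ k4 * g x1 x2 x3 x4) <= M) ->
  forall k, bounded (fun v => rho 4 v ^ k * kvec g v).
Proof.
  intros Hg k.
  assert (H0 : forall k1 k2 k3 k4, bounded (fun v : vec =>
             v 3%nat ^ k1 * v 2%nat ^ k2 * v 1%nat ^ k3 * v 0%nat ^ k4 * kvec g v)).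
  { intros k1 k2 k3 k4; destruct (Hg k1 k2 k3 k4) as (M & HM); exists M; intros v; apply HM. }
  assert (H1 : forall k2 k3 k4, bounded (fun v : vec =>
             (1 + v 3%nat ^ 2) ^ k * (v 2%nat ^ k2 * v 1%nat ^ k3 * v 0%nat ^ k4 * kvec g v))).
  { intros k2 k3 k4; apply bounded_weight_mul;
      [eapply bounded_ext; [| apply (H0 0%nat k2 k3 k4)]
      | eapply bounded_ext; [| apply (H0 (2 * k)%nat k2 k3 k4)]];
      intros; simpl; ring. }
  assert (H2 : forall k3 k4, bounded (fun v : vec => (1 + v 2%nat ^ 2) ^ k *
             ((1 + v 3%nat ^ 2) ^ k * (v 1%nat ^ k3 * v 0%nat ^ k4 * kvec g v)))).
  { intros k3 k4; apply bounded_weight_mul;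
      [eapply bounded_ext; [| apply (H1 0%nat k3 k4)]
      | eapply bounded_ext; [| apply (H1 (2 * k)%nat k3 k4)]];
      intros; simpl; ring. }
  assert (H3 : forall k4, bounded (fun v : vec => (1 + v 1%nat ^ 2) ^ k * ((1 + v 2%nat ^ 2) ^ k *
             ((1 + v 3%nat ^ 2) ^ k * (v 0%nat ^ k4 * kvec g v))))).
  { intros k4; apply bounded_weight_mul;
      [eapply bounded_ext; [| apply (H2 0%nat k4)] | eapply bounded_ext; [| apply (H2 (2 * k)%nat k4)]];
      intros; simpl; ring. }
  assert (H4 : bounded (fun v : vec => (1 + v 0%nat ^ 2) ^ k * ((1 + v 1%nat ^ 2) ^ k *
             ((1 + v 2%nat ^ 2) ^ k * ((1 + v 3%nat ^ 2) ^ k * kvec g v))))).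
  { apply bounded_weight_mul;
      [eapply bounded_ext; [| apply (H3 0%nat)] | eapply bounded_ext; [| apply (H3 (2 * k)%nat)]];
      intros; simpl; ring. }
  eapply bounded_ext; [| exact H4]; intros v.
  change (rho 4 v) with
    ((1 + v 0%nat ^ 2) * ((1 + v 1%nat ^ 2) * ((1 + v 2%nat ^ 2) * ((1 + v 3%nat ^ 2) * 1)))).
  rewrite Rmult_1_r, !Rpow_mult_distr; ring.
Qed.

Lemma decay_of_bounded_rho_pow_mul n (f : vec -> R) :
  (forall k, bounded (fun v => rho n v ^ k * f v)) ->
  forall z : Z, exists C, forall v, Rabs (f v) <= C * powerRZ (rho n v) z.
Proof.
  intros Hf z; set (k := Z.to_nat (- z)).
  destruct (Hf k) as (M & HM); exists M; intros v.
  pose proof (rho_pos n v) as Hr; pose proof (pow_lt _ k Hr).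
  assert (M0 : 0 <= M) by (eapply Rle_trans; [apply Rabs_pos | apply (HM v)]).
  apply Rle_trans with (M * powerRZ (rho n v) (- Z.of_nat k)).
  - rewrite powerRZ_neg', <- pow_powerRZ.
    specialize (HM v); rewrite Rabs_mult, Rabs_pos_eq in HM by lra.
    apply (Rmult_le_reg_l (rho n v ^ k)); [assumption |].
    rewrite (Rmult_comm M), <- Rmult_assoc, Rinv_r, Rmult_1_l by lra; exact HM.
  - apply Rmult_le_compat_l; [assumption |]; apply powerRZ_rho_le; unfold k; lia.
Qed.

Lemma schwartz_smooth_growth (g : R -> R -> R -> R -> R) :
  Schwartz4 g -> forall z, smooth_growth 4 z (kvec g).
Proof.
  intros Hs z.
  assert (Hdecay : forall l, exists C, forall v, Rabs (kvec (pderivs l g) v) <= C * powerRZ (rho 4 v) z)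
    by (intros l; apply decay_of_bounded_rho_pow_mul, bounded_rho_pow_mul, (proj2 (Hs l))).
  destruct (Hdecay nil) as (C0 & H0); destruct (Hdecay (1%nat :: nil)%list) as (C1 & H1);
  destruct (Hdecay (2%nat :: nil)%list) as (C2 & H2); destruct (Hdecay (3%nat :: nil)%list) as (C3 & H3);
  destruct (Hdecay (4%nat :: nil)%list) as (C4 & H4).
  pose proof (growth_coef_nonneg _ _ _ _ H0); pose proof (growth_coef_nonneg _ _ _ _ H1);
  pose proof (growth_coef_nonneg _ _ _ _ H2); pose proof (growth_coef_nonneg _ _ _ _ H3);
  pose proof (growth_coef_nonneg _ _ _ _ H4).
  exists (fun i => kvec (pderiv (4 - i) g)); split.
  - intros i v Hi; destruct (proj1 (Hs nil) (v 3%nat) (v 2%nat) (v 1%nat) (v 0%nat)) as (D1 & D2 & D3 & D4).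
    destruct i as [|[|[|[|i]]]]; try lia; unfold upd, kvec; simpl; apply Derive_correct; assumption.
  - exists (C0 + C1 + C2 + C3 + C4); intros v; pose proof (powerRZ_rho_pos 4 v z).
    split; [eapply Rle_trans; [apply H0 | apply Rmult_le_compat_r; lra] |].
    intros i Hi; destruct i as [|[|[|[|i]]]]; try lia; simpl Nat.sub;
      (eapply Rle_trans;
         [first [apply H1 | apply H2 | apply H3 | apply H4] | apply Rmult_le_compat_r; lra]).
Qed.

Definition smooth_growthC (n : nat) (z : Z) (A : vec -> C) : Prop :=
  smooth_growth n z (fun v => Re (A v)) /\ smooth_growth n z (fun v => Im (A v)).

Section SmoothGrowthC.

Variable n : nat.

Lemma smooth_growthC_ext z (A B : vec -> C) :
  (forall v, A v = B v) -> smooth_growthC n z A -> smooth_growthC n z B.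
Proof.
  intros E [HRe HIm]; split;
    [apply (smooth_growth_ext _ _ (fun v => Re (A v))) | apply (smooth_growth_ext _ _ (fun v => Im (A v)))];
    try assumption; intros v; rewrite E; reflexivity.
Qed.

Lemma smooth_growthC_mul (z1 z2 : Z) (A B : vec -> C) :
  smooth_growthC n z1 A -> smooth_growthC n z2 B -> smooth_growthC n (z1 + z2) (fun v => A v * B v)%C.
Proof.
  intros [ARe AIm] [BRe BIm]; split.
  - apply (smooth_growth_ext _ _ (fun v => 1 * (Re (A v) * Re (B v)) + (-1) * (Im (A v) * Im (B v))));
      [intros v; unfold Re, Im; simpl; ring |].
    apply smooth_growth_lin; apply smooth_growth_mul; assumption.
  - apply (smooth_growth_ext _ _ (fun v => 1 * (Re (A v) * Im (B v)) + 1 * (Im (A v) * Re (B v))));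
      [intros v; unfold Re, Im; simpl; ring |].
    apply smooth_growth_lin; apply smooth_growth_mul; assumption.
Qed.

Lemma smooth_growthC_RtoC z f : smooth_growth n z f -> smooth_growthC n z (fun v => RtoC (f v)).
Proof.
  intros Hf; split; [exact Hf |].
  eapply smooth_growth_ext; [| apply (smooth_growth_lin _ _ _ _ 0 0 Hf Hf)]; intros v; simpl; ring.
Qed.

Lemma smooth_growthC_const (z : Z) c : (0 <= z)%Z -> smooth_growthC n z (fun _ => c).
Proof. intros Hz; split; apply smooth_growth_const, Hz. Qed.

Lemma smooth_growthC_expi (z : Z) f :
  (0 <= z)%Z -> smooth_growth n z f -> smooth_growthC n z (fun v => expi (f v)).
Proof.
  assert (Hcos : forall x, Rabs (cos x) <= 1) by (intros x; pose proof (COS_bound x); apply Rabs_le; lra).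
  assert (Hsin : forall x, Rabs (sin x) <= 1) by (intros x; pose proof (SIN_bound x); apply Rabs_le; lra).
  intros Hz Hf; split.
  - apply (smooth_growth_comp n cos (fun x => - sin x) 1); auto using is_derive_cos.
    intros x; rewrite Rabs_Ropp; apply Hsin.
  - apply (smooth_growth_comp n sin cos 1); auto using is_derive_sin.
Qed.

Lemma schwartz1_smooth_growth (f : R -> R) u k : Schwartz1 f -> smooth_growth n 0 (fun v => f (u - v k)).
Proof.
  intros Hf; destruct (Hf O) as [Hd0 Hb0]; destruct (Hb0 O) as (M0 & HM0).
  destruct (Hf 1%nat) as [_ Hb1]; destruct (Hb1 O) as (M1 & HM1); simpl in Hd0, HM0, HM1.
  change (Derive (fun x => f x)) with (Derive f) in HM1.
  exists (fun i v => if Nat.eqb i k then - Derive f (u - v k) else 0); split.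
  - intros i v _; destruct (Nat.eqb i k) eqn:E.
    + apply Nat.eqb_eq in E; subst i.
      apply (is_derive_ext (fun t => f (u - t))); [intros t; rewrite upd_eq; reflexivity |].
      replace (- Derive f (u - v k)) with ((0 - 1) * Derive f (u - v k)) by ring.
      apply (is_derive_comp f (fun t => u - t)); [apply Derive_correct, Hd0 |].
      apply (is_derive_minus (fun _ => u) (fun t => t));
        [apply (is_derive_const (V := R_NormedModule)) | apply (is_derive_id (K := R_AbsRing))].
    + apply Nat.eqb_neq in E.
      apply (is_derive_ext (fun _ => f (u - v k)));
        [intros t; unfold upd; rewrite (proj2 (Nat.eqb_neq k i)) by auto; reflexivity |].
      apply (is_derive_const (V := R_NormedModule)).
  - exists (Rabs M0 + Rabs M1); intros v; simpl; rewrite Rmult_1_r.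
    pose proof (Rle_abs M0); pose proof (Rle_abs M1); pose proof (Rabs_pos M0); pose proof (Rabs_pos M1).
    specialize (HM0 (u - v k)); specialize (HM1 (u - v k)); rewrite Rmult_1_l in HM0, HM1.
    split; [lra |]; intros i _; destruct (Nat.eqb i k); [rewrite Rabs_Ropp | rewrite Rabs_R0]; lra.
Qed.

Lemma schwartzC1_smooth_growthC (h : R -> C) u k :
  SchwartzC1 h -> smooth_growthC n 0 (fun v => h (u - v k)).
Proof.
  intros [HRe HIm]; split;
    [apply (schwartz1_smooth_growth (fun t => Re (h t)))
    | apply (schwartz1_smooth_growth (fun t => Im (h t)))];
    assumption.
Qed.

End SmoothGrowthC.

Definition rapidly_decreasing (f : kernel) : Prop := forall z, smooth_growthC 4 z (kvec f).

Lemma schwartz_rapidly_decreasing (kappa : kernel) : SchwartzC4 kappa -> rapidly_decreasing kappa.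
Proof.
  intros [HRe HIm] z; split;
    [apply (schwartz_smooth_growth (fun x1 x2 x3 x4 => Re (kappa x1 x2 x3 x4)))
    | apply (schwartz_smooth_growth (fun x1 x2 x3 x4 => Im (kappa x1 x2 x3 x4)))]; assumption.
Qed.

(* [xmul i] multiplies by [x4] whenever [i] is not one of 1, 2, 3. *)
Lemma rapidly_decreasing_xmul i (f : kernel) : rapidly_decreasing f -> rapidly_decreasing (xmul i f).
Proof.
  intros Hf z.
  set (c := match i with 1%nat => 3%nat | 2%nat => 2%nat | 3%nat => 1%nat | _ => 0%nat end).
  apply (smooth_growthC_ext _ _ (fun v => RtoC (v c) * kvec f v)%C).
  { intros v; unfold c, xmul, kvec; destruct i as [|[|[|[|i]]]]; reflexivity. }
  replace z with (1 + (z - 1))%Z by lia.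
  apply smooth_growthC_mul; [| apply Hf].
  apply smooth_growthC_RtoC, smooth_growth_coord; unfold c; destruct i as [|[|[|[|i]]]]; lia.
Qed.

(** * The integrand of the group Fourier transform *)

Definition phase (mu u l x1 x2 x3 x4 : R) : R :=
  mu / (2 * l) * x2 - l * x4 + l * x3 * (u - x1) - l / 2 * x2 * (u - x1) ^ 2.

Definition phase_deriv_lam (mu u l x1 x2 x3 x4 : R) : R :=
  - (mu / (2 * l ^ 2)) * x2 - x4 + x3 * (u - x1) - 1 / 2 * x2 * (u - x1) ^ 2.

Definition integrand (mu : R) (h : R -> C) (u : R) (kappa : kernel) (l : R) : kernel :=
  fun x1 x2 x3 x4 => (kappa x1 x2 x3 x4 * expi (phase mu u l x1 x2 x3 x4) * h (u - x1)%R)%C.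

Definition integrand_deriv_lam (mu : R) (h : R -> C) (u : R) (kappa : kernel) (l : R) : kernel :=
  fun x1 x2 x3 x4 =>
    (integrand mu h u kappa l x1 x2 x3 x4 * (Ci * RtoC (phase_deriv_lam mu u l x1 x2 x3 x4)))%C.

Lemma piF_integrand l mu kappa h u : piF l mu kappa h u = cint4 (integrand mu h u kappa l).
Proof. reflexivity. Qed.

Lemma smooth_growth_cubic u a b c d :
  smooth_growth 4 3 (kvec (fun x1 x2 x3 x4 => a * x2 + b * x4 + c * x3 * (u - x1) + d * x2 * (u - x1) ^ 2)).
Proof.
  assert (Hx : forall k, (k < 4)%nat -> smooth_growth 4 1 (fun v => v k)) by apply smooth_growth_coord.
  assert (Hu : smooth_growth 4 1 (fun v => u - v 3%nat)).
  { apply (smooth_growth_ext _ _ (fun v => 1 * u + (-1) * v 3%nat)); [intros v; ring |].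
    apply smooth_growth_lin; [apply smooth_growth_const; lia | apply Hx; lia]. }
  assert (H1 : smooth_growth 4 3 (fun v => a * v 2%nat + b * v 0%nat)).
  { apply (smooth_growth_le _ 1); [lia |]; apply smooth_growth_lin; apply Hx; lia. }
  assert (H2 : smooth_growth 4 3 (fun v => c * (v 1%nat * (u - v 3%nat))
                                           + d * (v 2%nat * (u - v 3%nat) * (u - v 3%nat)))).
  { apply smooth_growth_lin.
    - apply (smooth_growth_le _ 2); [lia |]; apply (smooth_growth_mul _ 1 1); [apply Hx; lia | exact Hu].
    - apply (smooth_growth_mul _ 2 1); [apply (smooth_growth_mul _ 1 1); [apply Hx; lia |] |]; exact Hu. }
  eapply smooth_growth_ext; [| apply (smooth_growth_lin _ _ _ _ 1 1 H1 H2)].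
  intros v; unfold kvec; ring.
Qed.

Lemma smooth_growth_phase mu u l : smooth_growth 4 3 (kvec (phase mu u l)).
Proof.
  eapply smooth_growth_ext; [| apply (smooth_growth_cubic u (mu / (2 * l)) (- l) l (- (l / 2)))].
  intros v; unfold kvec, phase; ring.
Qed.

Lemma smooth_growth_phase_deriv_lam mu u l : smooth_growth 4 3 (kvec (phase_deriv_lam mu u l)).
Proof.
  eapply smooth_growth_ext; [| apply (smooth_growth_cubic u (- (mu / (2 * l ^ 2))) (-1) 1 (- (1 / 2)))].
  intros v; unfold kvec, phase_deriv_lam; ring.
Qed.

Lemma rapidly_decreasing_integrand mu h u kappa l :
  rapidly_decreasing kappa -> SchwartzC1 h -> rapidly_decreasing (integrand mu h u kappa l).
Proof.
  intros Hk Hh z; replace z with (z - 3 + 3 + 0)%Z by lia.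
  apply (smooth_growthC_mul _ _ _ (fun v => kvec kappa v * expi (kvec (phase mu u l) v))%C
           (fun v => h (u - v 3%nat))); [| apply schwartzC1_smooth_growthC, Hh].
  apply smooth_growthC_mul; [apply Hk |].
  apply smooth_growthC_expi; [lia | apply smooth_growth_phase].
Qed.

Lemma rapidly_decreasing_integrand_deriv_lam mu h u kappa l :
  rapidly_decreasing kappa -> SchwartzC1 h -> rapidly_decreasing (integrand_deriv_lam mu h u kappa l).
Proof.
  intros Hk Hh z; replace z with (z - 3 + (0 + 3))%Z by lia.
  apply (smooth_growthC_mul _ _ _ (kvec (integrand mu h u kappa l))
           (fun v => Ci * RtoC (kvec (phase_deriv_lam mu u l) v))%C);
    [apply rapidly_decreasing_integrand; assumption |].
  apply smooth_growthC_mul; [apply smooth_growthC_const; lia |].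
  apply smooth_growthC_RtoC, smooth_growth_phase_deriv_lam.
Qed.

Definition integrable4 (f : kernel) : Prop :=
  dominated_lipschitz 4 (fun v => Re (kvec f v)) /\ dominated_lipschitz 4 (fun v => Im (kvec f v)).

Lemma rapidly_decreasing_integrable4 f : rapidly_decreasing f -> integrable4 f.
Proof. intros Hf; destruct (Hf (-1)%Z); split; apply dominated_lipschitz_of_smooth_growth; assumption. Qed.

Definition kadd (f g : kernel) : kernel := fun x1 x2 x3 x4 => (f x1 x2 x3 x4 + g x1 x2 x3 x4)%C.

Definition kscal (a : C) (f : kernel) : kernel := fun x1 x2 x3 x4 => (a * f x1 x2 x3 x4)%C.

Lemma integrable4_add f g : integrable4 f -> integrable4 g -> integrable4 (kadd f g).
Proof.
  intros [fRe fIm] [gRe gIm]; split.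
  - apply (dominated_lipschitz_ext _ (fun v => 1 * Re (kvec f v) + 1 * Re (kvec g v)));
      [intros v; unfold kvec, kadd, Re; simpl; ring | apply dominated_lipschitz_lin; assumption].
  - apply (dominated_lipschitz_ext _ (fun v => 1 * Im (kvec f v) + 1 * Im (kvec g v)));
      [intros v; unfold kvec, kadd, Im; simpl; ring | apply dominated_lipschitz_lin; assumption].
Qed.

Lemma integrable4_scal a f : integrable4 f -> integrable4 (kscal a f).
Proof.
  intros [fRe fIm]; split.
  - apply (dominated_lipschitz_ext _ (fun v => Re a * Re (kvec f v) + (- Im a) * Im (kvec f v)));
      [intros v; unfold kvec, kscal, Re, Im; simpl; ring | apply dominated_lipschitz_lin; assumption].
  - apply (dominated_lipschitz_ext _ (fun v => Im a * Re (kvec f v) + Re a * Im (kvec f v)));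
      [intros v; unfold kvec, kscal, Re, Im; simpl; ring | apply dominated_lipschitz_lin; assumption].
Qed.

Lemma Re_cint4 f : Re (cint4 f) = iter_integral 4 (fun v => Re (kvec f v)) vzero.
Proof. reflexivity. Qed.

Lemma Im_cint4 f : Im (cint4 f) = iter_integral 4 (fun v => Im (kvec f v)) vzero.
Proof. reflexivity. Qed.

Lemma cint4_add f g : integrable4 f -> integrable4 g -> cint4 (kadd f g) = (cint4 f + cint4 g)%C.
Proof.
  intros [fRe fIm] [gRe gIm]; apply injective_projections.
  - change (Re (cint4 (kadd f g)) = Re (cint4 f) + Re (cint4 g)).
    rewrite !Re_cint4.
    replace (fun v => Re (kvec (kadd f g) v)) with (fun v => 1 * Re (kvec f v) + 1 * Re (kvec g v))
      by (apply functional_extensionality; intros v; unfold kvec, kadd, Re; simpl; ring).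
    rewrite iter_integral_lin by assumption; ring.
  - change (Im (cint4 (kadd f g)) = Im (cint4 f) + Im (cint4 g)).
    rewrite !Im_cint4.
    replace (fun v => Im (kvec (kadd f g) v)) with (fun v => 1 * Im (kvec f v) + 1 * Im (kvec g v))
      by (apply functional_extensionality; intros v; unfold kvec, kadd, Im; simpl; ring).
    rewrite iter_integral_lin by assumption; ring.
Qed.

Lemma cint4_scal a f : integrable4 f -> cint4 (kscal a f) = (a * cint4 f)%C.
Proof.
  intros [fRe fIm]; apply injective_projections.
  - change (Re (cint4 (kscal a f)) = Re a * Re (cint4 f) - Im a * Im (cint4 f)).
    rewrite Re_cint4, Re_cint4, Im_cint4.
    replace (fun v => Re (kvec (kscal a f) v))
      with (fun v => Re a * Re (kvec f v) + (- Im a) * Im (kvec f v))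
      by (apply functional_extensionality; intros v; unfold kvec, kscal, Re, Im; simpl; ring).
    rewrite iter_integral_lin by assumption; ring.
  - change (Im (cint4 (kscal a f)) = Re a * Im (cint4 f) + Im a * Re (cint4 f)).
    rewrite Im_cint4, Re_cint4, Im_cint4.
    replace (fun v => Im (kvec (kscal a f) v))
      with (fun v => Im a * Re (kvec f v) + Re a * Im (kvec f v))
      by (apply functional_extensionality; intros v; unfold kvec, kscal, Re, Im; simpl; ring).
    rewrite iter_integral_lin by assumption; ring.
Qed.

Lemma kernel_ext (f g : kernel) :
  (forall x1 x2 x3 x4, f x1 x2 x3 x4 = g x1 x2 x3 x4) -> f = g.
Proof.
  intros E; do 4 (apply functional_extensionality; intro); apply E.
Qed.

Lemma x4_eq_phase_deriv_lam mu u l x1 x2 x3 x4 :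
  x4 = - phase_deriv_lam mu u l x1 x2 x3 x4 - (mu / (2 * l ^ 2) + u ^ 2 / 2) * x2 + u * x3
       - x3 * x1 + u * (x2 * x1) - 1 / 2 * (x2 * (x1 * x1)).
Proof. unfold phase_deriv_lam; generalize (mu / (2 * l ^ 2)); intros c; field. Qed.

Lemma DeltaX4_decomposition (kappa : kernel) (h : R -> C) (lam mu u : R) :
  rapidly_decreasing kappa -> SchwartzC1 h ->
  DeltaX 4%nat lam mu kappa h u =
    (Ci * cint4 (integrand_deriv_lam mu h u kappa lam)
     - RtoC (mu / (2 * lam ^ 2) + u ^ 2 / 2) * DeltaX 2%nat lam mu kappa h u
     + RtoC u * DeltaX 3%nat lam mu kappa h u
     - piF lam mu (xmul 3%nat (xmul 1%nat kappa)) h u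
     + RtoC u * piF lam mu (xmul 2%nat (xmul 1%nat kappa)) h u
     - RtoC (1 / 2) * piF lam mu (xmul 2%nat (xmul 1%nat (xmul 1%nat kappa))) h u)%C.
Proof.
  intros Hk Hh.
  assert (Hint : forall f, rapidly_decreasing f -> integrable4 (integrand mu h u f lam))
    by (intros f Hf; apply rapidly_decreasing_integrable4, rapidly_decreasing_integrand; assumption).
  assert (HD : integrable4 (integrand_deriv_lam mu h u kappa lam))
    by (apply rapidly_decreasing_integrable4, rapidly_decreasing_integrand_deriv_lam; assumption).
  assert (H2 := Hint _ (rapidly_decreasing_xmul 2 _ Hk)).
  assert (H3 := Hint _ (rapidly_decreasing_xmul 3 _ Hk)).
  assert (H31 := Hint _ (rapidly_decreasing_xmul 3 _ (rapidly_decreasing_xmul 1 _ Hk))).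
  assert (H21 := Hint _ (rapidly_decreasing_xmul 2 _ (rapidly_decreasing_xmul 1 _ Hk))).
  assert (H211 := Hint _ (rapidly_decreasing_xmul 2 _
                            (rapidly_decreasing_xmul 1 _ (rapidly_decreasing_xmul 1 _ Hk)))).
  unfold DeltaX; rewrite !piF_integrand.
  transitivity (cint4
    (kadd (kscal Ci (integrand_deriv_lam mu h u kappa lam))
    (kadd (kscal (RtoC (- (mu / (2 * lam ^ 2) + u ^ 2 / 2))) (integrand mu h u (xmul 2 kappa) lam))
    (kadd (kscal (RtoC u) (integrand mu h u (xmul 3 kappa) lam))
    (kadd (kscal (RtoC (-1)) (integrand mu h u (xmul 3 (xmul 1 kappa)) lam))
    (kadd (kscal (RtoC u) (integrand mu h u (xmul 2 (xmul 1 kappa)) lam))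
          (kscal (RtoC (- (1 / 2))) (integrand mu h u (xmul 2 (xmul 1 (xmul 1 kappa))) lam)))))))).
  - f_equal; apply kernel_ext; intros x1 x2 x3 x4.
    unfold kadd, kscal, integrand_deriv_lam, integrand, xmul.
    (* the first occurrence of [x4] is the factor contributed by [xmul 4] *)
    rewrite (x4_eq_phase_deriv_lam mu u lam x1 x2 x3 x4) at 1.
    generalize (mu / (2 * lam ^ 2)); intros c.
    apply injective_projections; simpl; field.
  - rewrite !cint4_add, !cint4_scal by auto 6 using integrable4_add, integrable4_scal.
    apply injective_projections; simpl; ring.
Qed.

(** * Differentiation in [lam] under the integral sign *)

Lemma is_derive_of_quadratic_remainder {V : NormedModule R_AbsRing} (f : R -> V) (x : R) (l : V) (r M : R) :
  0 < r -> (forall d, Rabs d <= r -> norm (minus (minus (f (x + d)) (f x)) (scal d l)) <= M * d ^ 2) ->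
  is_derive f x l.
Proof.
  intros Hr Hf; split; [apply is_linear_scal_l |].
  intros x0 Hx0.
  apply (is_filter_lim_locally_unique (K := R_AbsRing) (V := R_NormedModule)) in Hx0; subst x0.
  intros eps; set (M' := Rabs M + 1).
  assert (HM' : 0 < M') by (unfold M'; pose proof (Rabs_pos M); lra).
  assert (Hd : 0 < Rmin r (eps / M'))
    by (apply Rmin_pos; [lra | apply Rdiv_lt_0_compat; [apply cond_pos | lra]]).
  exists (mkposreal _ Hd); intros y Hy.
  change (Rabs (y - x) < Rmin r (eps / M')) in Hy.
  pose proof (Rmin_l r (eps / M')); pose proof (Rmin_r r (eps / M')).
  assert (Ey : x + (y - x) = y) by (simpl; ring).
  specialize (Hf (y - x) ltac:(lra)); rewrite Ey in Hf.
  change (norm (minus y x)) with (Rabs (y - x)); change (minus y x) with (y - x).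
  eapply Rle_trans; [exact Hf |].
  rewrite <- (pow2_abs (y - x)); pose proof (Rabs_pos (y - x)); pose proof (Rle_abs M).
  apply Rle_trans with (M' * Rabs (y - x) * Rabs (y - x)); [unfold M'; nra |].
  apply Rmult_le_compat_r; [assumption |].
  apply Rle_trans with (M' * (eps / M')); [apply Rmult_le_compat_l; lra | right; field; lra].
Qed.

Lemma norm_C_le (z : C) : norm (K := R_AbsRing) (V := C_R_NormedModule) z <= Rabs (Re z) + Rabs (Im z).
Proof.
  change (sqrt (Rabs (Re z) ^ 2 + Rabs (Im z) ^ 2) <= Rabs (Re z) + Rabs (Im z)).
  pose proof (Rabs_pos (Re z)); pose proof (Rabs_pos (Im z)).
  rewrite <- (sqrt_pow2 (Rabs (Re z) + Rabs (Im z))) by lra.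
  apply sqrt_le_1_alt; nra.
Qed.

Lemma Cmult_parts_le (z : C) (p q a b : R) :
  Rabs (Re z) <= a -> Rabs (Im z) <= a -> Rabs p <= b -> Rabs q <= b ->
  Rabs (Re (z * (p, q))) <= 2 * a * b /\ Rabs (Im (z * (p, q))) <= 2 * a * b.
Proof.
  set (w := (p, q) : C); change p with (Re w); change q with (Im w).
  intros Hz1 Hz2 Hw1 Hw2.
  assert (Hp : forall s t, Rabs s <= a -> Rabs t <= b -> Rabs (s * t) <= a * b)
    by (intros s t Hs Ht; rewrite Rabs_mult; apply Rmult_le_compat; auto using Rabs_pos).
  change (Re (z * w)) with (Re z * Re w - Im z * Im w).
  change (Im (z * w)) with (Re z * Im w + Im z * Re w).
  unfold Rminus; split; eapply Rle_trans; try apply Rabs_triang; try rewrite Rabs_Ropp;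
    pose proof (Hp _ _ Hz1 Hw1); pose proof (Hp _ _ Hz2 Hw2);
    pose proof (Hp _ _ Hz1 Hw2); pose proof (Hp _ _ Hz2 Hw1); lra.
Qed.

Lemma abs_sin_le x : Rabs (sin x) <= Rabs x.
Proof.
  assert (Hpos : forall y, 0 <= y -> Rabs (sin y) <= y).
  { intros y Hy; destruct (Req_dec y 0) as [-> | Hy0]; [rewrite sin_0, Rabs_R0; lra |].
    pose proof (sin_lt_x y ltac:(lra)); pose proof PI2_1; apply Rabs_le; split; [| lra].
    destruct (Rle_or_lt y PI) as [HyPI | HyPI];
      [pose proof (sin_ge_0 y Hy HyPI) | pose proof (SIN_bound y)]; lra. }
  destruct (Rle_or_lt 0 x).
  - rewrite (Rabs_pos_eq x) by lra; auto.
  - rewrite (Rabs_left x), <- (Ropp_involutive x), sin_neg, Rabs_Ropp, Ropp_involutive by lra.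
    apply Hpos; lra.
Qed.

Lemma abs_le_of_between_0 c t : Rmin 0 t <= c <= Rmax 0 t -> Rabs c <= Rabs t.
Proof.
  unfold Rmin, Rmax; intros Hc; destruct (Rle_dec 0 t);
    [rewrite (Rabs_pos_eq t) by lra | rewrite (Rabs_left t) by lra]; apply Rabs_le; lra.
Qed.

Lemma abs_cos_sub_1_le t : Rabs (cos t - 1) <= t ^ 2.
Proof.
  destruct (MVT_gen cos 0 t (fun x => - sin x)) as (c & Hc & Heq).
  { intros; apply is_derive_cos. }
  { intros; apply continuity_cos. }
  rewrite cos_0 in Heq; rewrite Heq, Rmult_comm, Rminus_0_r, Rabs_mult, Rabs_Ropp.
  pose proof (abs_le_of_between_0 c t Hc); pose proof (abs_sin_le c); pose proof (Rabs_pos (sin c)).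
  rewrite <- pow2_abs; simpl; rewrite Rmult_1_r.
  apply Rmult_le_compat_l; [apply Rabs_pos | lra].
Qed.

Lemma abs_sin_sub_id_le t : Rabs (sin t - t) <= 2 * t ^ 2.
Proof.
  destruct (MVT_gen (fun x => sin x - x) 0 t (fun x => cos x - 1)) as (c & Hc & Heq).
  { intros x _; apply (is_derive_minus sin (fun x => x));
      [apply is_derive_sin | apply (is_derive_id (K := R_AbsRing))]. }
  { intros; apply continuity_pt_minus;
      [apply continuity_sin | apply derivable_continuous_pt, derivable_pt_id]. }
  rewrite sin_0, !Rminus_0_r in Heq; rewrite Heq, Rabs_mult.
  pose proof (abs_le_of_between_0 c t Hc) as Hct; pose proof (abs_cos_sub_1_le c).
  pose proof (COS_bound c); assert (Rabs (cos c - 1) <= 2) by (apply Rabs_le; lra).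
  assert (Hc2 : c ^ 2 <= t ^ 2) by (rewrite <- (pow2_abs c), <- (pow2_abs t); pose proof (Rabs_pos c); nra).
  pose proof (Rabs_pos t); pose proof (Rabs_pos (cos c - 1)); rewrite <- (pow2_abs t) in *.
  pose proof (pow2_ge_0 (Rabs t)).
  destruct (Rle_or_lt (Rabs t) 1).
  - apply Rle_trans with (Rabs t ^ 2 * Rabs t); [apply Rmult_le_compat_r; lra | nra].
  - apply Rle_trans with (2 * Rabs t); [apply Rmult_le_compat_r; lra | nra].
Qed.

(* Second-order Taylor expansion of [cos] and [sin] at [a], with the increment [theta]
   replaced by its approximation [q]. *)
Lemma cos_add_second_order a theta q :
  Rabs (cos (a + theta) - cos a + q * sin a) <= 3 * theta ^ 2 + Rabs (theta - q).
Proof.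
  rewrite cos_plus.
  replace (cos a * cos theta - sin a * sin theta - cos a + q * sin a)
    with (cos a * (cos theta - 1) - sin a * ((sin theta - theta) + (theta - q))) by ring.
  pose proof (COS_bound a); pose proof (SIN_bound a).
  pose proof (abs_cos_sub_1_le theta); pose proof (abs_sin_sub_id_le theta).
  pose proof (Rabs_triang (sin theta - theta) (theta - q)).
  unfold Rminus at 1; eapply Rle_trans; [apply Rabs_triang |].
  rewrite Rabs_Ropp, !Rabs_mult.
  assert (Rabs (cos a) <= 1) by (apply Rabs_le; lra); assert (Rabs (sin a) <= 1) by (apply Rabs_le; lra).
  pose proof (Rabs_pos (cos theta - 1)); pose proof (Rabs_pos (sin theta - theta + (theta - q))).
  pose proof (Rabs_pos (cos a)); pose proof (Rabs_pos (sin a)); nra.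
Qed.

Lemma sin_add_second_order a theta q :
  Rabs (sin (a + theta) - sin a - q * cos a) <= 3 * theta ^ 2 + Rabs (theta - q).
Proof.
  rewrite sin_plus.
  replace (sin a * cos theta + cos a * sin theta - sin a - q * cos a)
    with (sin a * (cos theta - 1) + cos a * ((sin theta - theta) + (theta - q))) by ring.
  pose proof (COS_bound a); pose proof (SIN_bound a).
  pose proof (abs_cos_sub_1_le theta); pose proof (abs_sin_sub_id_le theta).
  pose proof (Rabs_triang (sin theta - theta) (theta - q)).
  eapply Rle_trans; [apply Rabs_triang |]; rewrite !Rabs_mult.
  assert (Rabs (cos a) <= 1) by (apply Rabs_le; lra); assert (Rabs (sin a) <= 1) by (apply Rabs_le; lra).
  pose proof (Rabs_pos (cos theta - 1)); pose proof (Rabs_pos (sin theta - theta + (theta - q))).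
  pose proof (Rabs_pos (cos a)); pose proof (Rabs_pos (sin a)); nra.
Qed.

Lemma second_order_bound theta q d delta r P E :
  1 <= r -> 0 <= E -> Rabs d <= delta ->
  Rabs q <= Rabs d * P * r ^ 3 -> Rabs (theta - q) <= E * r * d ^ 2 ->
  3 * theta ^ 2 + Rabs (theta - q) <= (6 * P ^ 2 + 6 * E ^ 2 * delta ^ 2 + E) * r ^ 6 * d ^ 2.
Proof.
  intros Hr HE Hd Hq Hdiff.
  pose proof (Rabs_pos q); pose proof (Rabs_pos d); pose proof (Rabs_pos (theta - q)).
  assert (Hq2 : q ^ 2 <= P ^ 2 * r ^ 6 * d ^ 2).
  { rewrite <- (pow2_abs q), <- (pow2_abs d).
    replace (P ^ 2 * r ^ 6 * Rabs d ^ 2) with ((Rabs d * P * r ^ 3) ^ 2) by ring.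
    apply pow_incr; lra. }
  assert (Hr3 : r <= r ^ 6) by (rewrite <- (pow_1 r) at 1; apply Rle_pow; [lra | lia]).
  assert (Hr2 : r ^ 2 <= r ^ 6) by (apply Rle_pow; [lra | lia]).
  assert (Hd2 : d ^ 2 <= delta ^ 2) by (rewrite <- (pow2_abs d); apply pow_incr; lra).
  assert (Hdiff2 : (theta - q) ^ 2 <= E ^ 2 * delta ^ 2 * r ^ 6 * d ^ 2).
  { rewrite <- (pow2_abs (theta - q)).
    apply Rle_trans with ((E * r * d ^ 2) ^ 2); [apply pow_incr; lra |].
    replace ((E * r * d ^ 2) ^ 2) with (E ^ 2 * (d ^ 2 * (r ^ 2 * d ^ 2))) by ring.
    replace (E ^ 2 * delta ^ 2 * r ^ 6 * d ^ 2) with (E ^ 2 * (delta ^ 2 * (r ^ 6 * d ^ 2))) by ring.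
    pose proof (pow2_ge_0 d); pose proof (pow2_ge_0 r); pose proof (pow2_ge_0 E).
    apply Rmult_le_compat_l; [assumption |]; apply Rmult_le_compat; nra. }
  assert (Hdiff1 : Rabs (theta - q) <= E * r ^ 6 * d ^ 2).
  { eapply Rle_trans; [exact Hdiff |]; pose proof (pow2_ge_0 d); apply Rmult_le_compat_r; [assumption |].
    apply Rmult_le_compat_l; assumption. }
  assert (Hsq : theta ^ 2 <= 2 * q ^ 2 + 2 * (theta - q) ^ 2)
    by (pose proof (pow2_ge_0 (theta - 2 * q)); nra).
  nra.
Qed.

Lemma phase_remainder mu u l d x1 x2 x3 x4 :
  l <> 0 -> l + d <> 0 ->
  phase mu u (l + d) x1 x2 x3 x4 - phase mu u l x1 x2 x3 x4 - d * phase_deriv_lam mu u l x1 x2 x3 x4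
  = mu * x2 * d ^ 2 / (2 * l ^ 2 * (l + d)).
Proof. intros; unfold phase, phase_deriv_lam; field; auto. Qed.

Lemma abs_phase_remainder_le mu u l d x1 x2 x3 x4 :
  l <> 0 -> Rabs d <= Rabs l / 2 ->
  Rabs (phase mu u (l + d) x1 x2 x3 x4 - phase mu u l x1 x2 x3 x4 - d * phase_deriv_lam mu u l x1 x2 x3 x4)
  <= Rabs mu / Rabs l ^ 3 * Rabs x2 * d ^ 2.
Proof.
  intros Hl Hd; pose proof (Rabs_pos_lt l Hl) as Hl0.
  assert (Hld : Rabs l / 2 <= Rabs (l + d)).
  { pose proof (Rabs_triang (l + d) (- d)); rewrite Rabs_Ropp in H.
    replace (l + d + - d) with l in H by ring; lra. }
  assert (Hld0 : l + d <> 0) by (intros E; rewrite E, Rabs_R0 in Hld; lra).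
  rewrite phase_remainder by assumption.
  unfold Rdiv; rewrite !Rabs_mult, Rabs_inv, !Rabs_mult, (Rabs_pos_eq 2) by lra.
  rewrite (Rabs_pos_eq (d ^ 2)) by apply pow2_ge_0; rewrite <- (RPow_abs l 2).
  pose proof (Rabs_pos mu); pose proof (Rabs_pos x2); pose proof (pow2_ge_0 d).
  assert (Hden : Rabs l ^ 3 <= 2 * Rabs l ^ 2 * Rabs (l + d)).
  { replace (Rabs l ^ 3) with (2 * Rabs l ^ 2 * (Rabs l / 2)) by field.
    apply Rmult_le_compat_l; [pose proof (pow2_ge_0 (Rabs l)); lra | assumption]. }
  apply Rle_trans with (Rabs mu * Rabs x2 * d ^ 2 * / Rabs l ^ 3); [| right; field; lra].
  apply Rmult_le_compat_l; [apply Rmult_le_pos; [apply Rmult_le_pos |]; assumption |].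
  apply Rinv_le_contravar; [apply pow_lt, Hl0 | exact Hden].
Qed.

Lemma expi_remainder_bound mu u lam :
  lam <> 0 -> exists Cq, forall d v, Rabs d <= Rabs lam / 2 ->
    let a := kvec (phase mu u lam) v in
    let b := kvec (phase mu u (lam + d)) v in
    let q := d * kvec (phase_deriv_lam mu u lam) v in
    Rabs (cos b - cos a + q * sin a) <= Cq * rho 4 v ^ 6 * d ^ 2 /\
    Rabs (sin b - sin a - q * cos a) <= Cq * rho 4 v ^ 6 * d ^ 2.
Proof.
  intros Hl; destruct (smooth_growth_phase_deriv_lam mu u lam) as (? & _ & Cp & HCp).
  set (E := Rabs mu / Rabs lam ^ 3).
  assert (HE : 0 <= E) by (apply Rdiv_le_0_compat; [apply Rabs_pos | apply pow_lt, Rabs_pos_lt, Hl]).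
  exists (6 * Cp ^ 2 + 6 * E ^ 2 * (Rabs lam / 2) ^ 2 + E); intros d v Hd a b q.
  assert (Hq : Rabs q <= Rabs d * Cp * rho 4 v ^ 3).
  { unfold q; rewrite Rabs_mult, Rmult_assoc; apply Rmult_le_compat_l; [apply Rabs_pos |].
    apply (proj1 (HCp v)). }
  assert (Hdiff : Rabs (b - a - q) <= E * rho 4 v * d ^ 2).
  { unfold a, b, q, kvec; eapply Rle_trans; [apply abs_phase_remainder_le; assumption |].
    unfold E; apply Rmult_le_compat_r; [apply pow2_ge_0 |].
    apply Rmult_le_compat_l; [assumption | apply abs_coord_le_rho; lia]. }
  pose proof (second_order_bound (b - a) q d (Rabs lam / 2) (rho 4 v) Cp E
                (rho_ge_1 4 v) HE Hd Hq Hdiff) as Hbound.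
  replace b with (a + (b - a)) by ring.
  split; (eapply Rle_trans; [apply cos_add_second_order || apply sin_add_second_order | exact Hbound]).
Qed.

Definition integrand_remainder mu h u kappa lam d : kernel :=
  kadd (integrand mu h u kappa (lam + d))
       (kadd (kscal (RtoC (-1)) (integrand mu h u kappa lam))
             (kscal (RtoC (- d)) (integrand_deriv_lam mu h u kappa lam))).

Lemma integrand_remainder_eq mu h u kappa lam d v :
  kvec (integrand_remainder mu h u kappa lam d) v =
  (kvec kappa v * h (u - v 3%nat)%R *
   ((cos (kvec (phase mu u (lam + d)) v) - cos (kvec (phase mu u lam) v)
      + d * kvec (phase_deriv_lam mu u lam) v * sin (kvec (phase mu u lam) v))%R,
    (sin (kvec (phase mu u (lam + d)) v) - sin (kvec (phase mu u lam) v)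
      - d * kvec (phase_deriv_lam mu u lam) v * cos (kvec (phase mu u lam) v))%R))%C.
Proof.
  unfold integrand_remainder, integrand_deriv_lam, integrand, kadd, kscal, kvec, expi.
  apply injective_projections; simpl; ring.
Qed.

Lemma integrand_remainder_bound kappa h mu u lam :
  rapidly_decreasing kappa -> SchwartzC1 h -> lam <> 0 ->
  exists M, forall d, Rabs d <= Rabs lam / 2 -> forall v,
    Rabs (Re (kvec (integrand_remainder mu h u kappa lam d) v)) <= M * d ^ 2 / rho 4 v /\
    Rabs (Im (kvec (integrand_remainder mu h u kappa lam d) v)) <= M * d ^ 2 / rho 4 v.
Proof.
  intros Hk Hh Hl.
  destruct (smooth_growthC_mul 4 (-7) 0 _ _ (Hk (-7)%Z) (schwartzC1_smooth_growthC 4 h u 3 Hh))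
    as [(? & _ & CA1 & HA1) (? & _ & CA2 & HA2)].
  destruct (expi_remainder_bound mu u lam Hl) as (Cq & HCq).
  set (CA := Rabs CA1 + Rabs CA2).
  exists (2 * CA * Cq); intros d Hd v.
  rewrite integrand_remainder_eq.
  pose proof (rho_pos 4 v); pose proof (Rabs_pos CA1); pose proof (Rabs_pos CA2).
  pose proof (Rle_abs CA1); pose proof (Rle_abs CA2).
  assert (0 < / rho 4 v ^ 7) by (apply Rinv_0_lt_compat, pow_lt; assumption).
  destruct (HCq d v Hd) as [Hc Hs].
  assert (HRe : Rabs (Re (kvec kappa v * h (u - v 3%nat)%R)) <= CA * / rho 4 v ^ 7)
    by (eapply Rle_trans; [apply (proj1 (HA1 v)) | apply Rmult_le_compat_r; unfold CA; lra]).
  assert (HIm : Rabs (Im (kvec kappa v * h (u - v 3%nat)%R)) <= CA * / rho 4 v ^ 7)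
    by (eapply Rle_trans; [apply (proj1 (HA2 v)) | apply Rmult_le_compat_r; unfold CA; lra]).
  replace (2 * CA * Cq * d ^ 2 / rho 4 v)
    with (2 * (CA * / rho 4 v ^ 7) * (Cq * rho 4 v ^ 6 * d ^ 2)) by (field; lra).
  apply Cmult_parts_le; assumption.
Qed.

Lemma piF_remainder_bound kappa h mu u lam :
  rapidly_decreasing kappa -> SchwartzC1 h -> lam <> 0 ->
  exists M, forall d, Rabs d <= Rabs lam / 2 ->
    norm (K := R_AbsRing) (V := C_R_NormedModule)
      (minus (minus (piF (lam + d) mu kappa h u) (piF lam mu kappa h u))
             (scal d (cint4 (integrand_deriv_lam mu h u kappa lam)))) <= M * d ^ 2.
Proof.
  intros Hk Hh Hl.
  destruct (integrand_remainder_bound kappa h mu u lam Hk Hh Hl) as (M & HM).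
  exists (2 * M * weight_integral ^ 4); intros d Hd.
  assert (Hint : forall l, integrable4 (integrand mu h u kappa l))
    by (intros l; apply rapidly_decreasing_integrable4, rapidly_decreasing_integrand; assumption).
  assert (HD : integrable4 (integrand_deriv_lam mu h u kappa lam))
    by (apply rapidly_decreasing_integrable4, rapidly_decreasing_integrand_deriv_lam; assumption).
  assert (Hrem : integrable4 (integrand_remainder mu h u kappa lam d))
    by (unfold integrand_remainder; auto using integrable4_add, integrable4_scal).
  replace (minus (minus (piF (lam + d) mu kappa h u) (piF lam mu kappa h u))
                 (scal d (cint4 (integrand_deriv_lam mu h u kappa lam))))
    with (cint4 (integrand_remainder mu h u kappa lam d)).
  2:{ unfold integrand_remainder; rewrite !piF_integrand.
      rewrite !cint4_add, !cint4_scal by auto using integrable4_add, integrable4_scal.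
      generalize (cint4 (integrand mu h u kappa (lam + d))) (cint4 (integrand mu h u kappa lam))
        (cint4 (integrand_deriv_lam mu h u kappa lam)); intros a b c.
      apply injective_projections; simpl; unfold scal; simpl; unfold mult; simpl; ring. }
  eapply Rle_trans; [apply norm_C_le |]; rewrite Re_cint4, Im_cint4.
  destruct Hrem as [HRe HIm].
  pose proof (abs_iter_integral_le 4 _ (M * d ^ 2) HRe (fun v => proj1 (HM d Hd v)) vzero).
  pose proof (abs_iter_integral_le 4 _ (M * d ^ 2) HIm (fun v => proj2 (HM d Hd v)) vzero).
  lra.
Qed.

Theorem mainTheorem4 (kappa : kernel) (h : R -> C) (lam mu u : R) :
  SchwartzC4 kappa -> SchwartzC1 h -> lam <> 0%R ->
  exists dpi : C,
    is_derive (V := C_R_NormedModule) (fun l => piF l mu kappa h u) lam dpi /\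
    DeltaX 4%nat lam mu kappa h u =
      (Ci * dpi
       - RtoC (mu / (2 * lam ^ 2) + u ^ 2 / 2) * DeltaX 2%nat lam mu kappa h u
       + RtoC u * DeltaX 3%nat lam mu kappa h u
       - piF lam mu (xmul 3%nat (xmul 1%nat kappa)) h u
       + RtoC u * piF lam mu (xmul 2%nat (xmul 1%nat kappa)) h u
       - RtoC (1 / 2) * piF lam mu (xmul 2%nat (xmul 1%nat (xmul 1%nat kappa))) h u)%C.
Proof.
  intros Hk Hh Hl.
  pose proof (schwartz_rapidly_decreasing kappa Hk) as Hrd.
  exists (cint4 (integrand_deriv_lam mu h u kappa lam)); split.
  - destruct (piF_remainder_bound kappa h mu u lam Hrd Hh Hl) as (M & HM).
    apply (is_derive_of_quadratic_remainder _ _ _ (Rabs lam / 2) M); [| exact HM].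
    pose proof (Rabs_pos_lt lam Hl); lra.
  - apply DeltaX4_decomposition; assumption.
Qed.
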